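(* Let $L\ge 2$, let $\Omega\subsetneq\mathbb{Z}_L$ with $|\Omega|=n$, and let $\mathcal{C}=\{C_0,\dots,C_{M-1}\}$ be a set of $M$ complex sequences of length $L$ such that every $C_j$ satisfies the spectral constraint: its frequency-domain dual $\widehat{C}_j=(\hat c_{j,0},\dots,\hat c_{j,L-1})$ satisfies $|\hat c_{j,k}|^2=\frac{L}{L-n}$ for $k\notin\Omega$ and $\hat c_{j,k}=0$ for $k\in\Omega$. Define $\theta_a=\max\{|\theta_{C_i}(\tau)|:0\le i<M,\ 0<\tau<L\}$ and, when $M\ge 2$, $\theta_c=\max\{|\theta_{C_i,C_j}(\tau)|:0\le i\ne j<M,\ 0\le\tau<L\}$. Then $$\theta_a\ge L\sqrt{\frac{n}{(L-n)(L-1)}},\qquad \theta_c\ge \frac{L}{\sqrt{L-n}}.$$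
   Context: $\omega_L=e^{2\pi\sqrt{-1}/L}$. For a length-$L$ sequence $C=(c_0,\dots,c_{L-1})$ its frequency-domain dual is $\widehat C=(\hat c_0,\dots,\hat c_{L-1})$ with $\hat c_k=\frac{1}{\sqrt L}\sum_{t=0}^{L-1}c_t\omega_L^{-tk}$. The periodic cross-correlation of length-$L$ sequences $C,D$ is $\theta_{C,D}(\tau)=\sum_{t=0}^{L-1}c_t d^*_{\langle t+\tau\rangle_L}$, where $\langle\cdot\rangle_L$ is reduction mod $L$ and $^*$ is complex conjugation; $\theta_C=\theta_{C,C}$. *)

From HB Require Import structures.
From mathcomp Require Import all_boot all_order all_algebra.
From mathcomp Require Import all_classical all_reals.
From mathcomp Require Import trigo.
From mathcomp Require Import complex.
Set Implicit Arguments. Unset Strict Implicit. Unset Printing Implicit Defensive.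
Import Order.TTheory GRing.Theory Num.Theory.
Local Open Scope ring_scope.
Local Open Scope complex_scope.

Section Defs.
Variable R : realType.

Definition omegaL (L : nat) : R[i] :=
  (cos (2 * pi / L%:R)) +i* (sin (2 * pi / L%:R)).

Definition seq_at (L : nat) (c : 'I_L -> R[i]) (m : nat) : R[i] :=
  match insub (m %% L)%N : option 'I_L with
  | Some i => c i | None => 0 end.

Definition dft (L : nat) (c : 'I_L -> R[i]) (k : 'I_L) : R[i] :=
  ((Num.sqrt (L%:R : R))^-1)%:C * \sum_(t < L) c t * (omegaL L) ^- (t * k).

Definition xcorr (L : nat) (c d : 'I_L -> R[i]) (tau : nat) : R[i] :=
  \sum_(t < L) c t * Num.conj (seq_at d (t + tau)).

Definition theta_a (L M : nat) (C : 'I_M -> 'I_L -> R[i]) : R :=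
  \big[Num.max/0]_(i < M) \big[Num.max/0]_(tau < L | (0 < tau)%N)
     ComplexField.Normc.normc (xcorr (C i) (C i) tau).

Definition theta_c (L M : nat) (C : 'I_M -> 'I_L -> R[i]) : R :=
  \big[Num.max/0]_(i < M) \big[Num.max/0]_(j < M | i != j)
     \big[Num.max/0]_(tau < L) ComplexField.Normc.normc (xcorr (C i) (C j) tau).

Definition spectral_constraint (L : nat) (Om : {set 'I_L}) (c : 'I_L -> R[i]) : Prop :=
  forall k : 'I_L,
    (k \in Om -> dft c k = 0) /\
    (k \notin Om -> ComplexField.Normc.normc (dft c k) ^+ 2 = L%:R / (L%:R - #|Om|%:R)).
End Defs.

From HB Require Import structures.
From mathcomp Require Import all_boot all_order all_algebra.
From mathcomp Require Import all_classical all_reals.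
From mathcomp Require Import complex trigo.
From mathcomp Require Import lra ring.
Set Implicit Arguments. Unset Strict Implicit. Unset Printing Implicit Defensive.
Import Order.TTheory GRing.Theory Num.Theory.
Local Open Scope ring_scope.
Local Open Scope complex_scope.

(* By the inverse DFT, theta_{C,D}(tau) = sum_k c^_k conj(d^_k) omega^(-tau k), so the
   orthogonality of the characters tau |-> omega^(tau k) gives the Parseval identity
   sum_tau |theta_{C,D}(tau)|^2 = L sum_k |c^_k|^2 |d^_k|^2, which the spectral
   constraint evaluates to L^3/(L-n) with n = #|Om|; likewise theta_C(0) =
   sum_k |c^_k|^2 = L.  Bounding the L-1 out-of-phase terms of an autocorrelation by
   theta_a^2 gives (L-1) theta_a^2 >= L^3/(L-n) - L^2 = L^2 n/(L-n), and bounding all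
   L terms of a cross-correlation by theta_c^2 gives L theta_c^2 >= L^3/(L-n). *)

Local Notation normc := ComplexField.Normc.normc.

Lemma sum_expr_unity_root (F : idomainType) (L : nat) (z : F) :
  z ^+ L = 1 -> z != 1 -> \sum_(t < L) z ^+ t = 0.
Proof.
move=> zL z_neq1; apply/eqP; have := subrX1 z L.
by rewrite zL subrr => /esym/eqP; rewrite mulf_eq0 subr_eq0 (negbTE z_neq1).
Qed.

Lemma sum_prim_root_orthogonal (F : fieldType) (L : nat) (w : F) (i j : 'I_L) :
  L.-primitive_root w ->
  \sum_(t < L) w ^+ (t * i) * w ^- (t * j) = (i == j)%:R * L%:R.
Proof.
move=> w_prim; have w_neq0 : w != 0.
  by rewrite (prim_root_eq0 w_prim) -lt0n (leq_ltn_trans (leq0n i) (ltn_ord i)).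
have expr_ratio (a b t : nat) : w ^+ (t * a) * w ^- (t * b) = (w ^+ a / w ^+ b) ^+ t.
  by rewrite exprMn exprVn -!exprM mulnC (mulnC b).
under eq_bigr do rewrite expr_ratio.
have [->|i_neq_j] := eqVneq i j.
  rewrite divff ?expf_neq0 // mul1r.
  by under eq_bigr do rewrite expr1n; rewrite sumr_const card_ord.
rewrite mul0r sum_expr_unity_root //.
  by rewrite expr_div_n -!exprM !(mulnC _ L) !exprM (prim_expr_order w_prim) !expr1n divr1.
apply: contra i_neq_j => /eqP/divr1_eq/eqP.
by rewrite (eq_prim_root_expr w_prim) !modn_small // => /eqP/val_inj->.
Qed.

Lemma sum_indicator_setC (T : finType) (V : pzRingType) (A : {set T}) (x : V) :
  \sum_(k : T) (k \notin A)%:R * x = #|~: A|%:R * x.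
Proof.
transitivity (\sum_(k in ~: A) x); last by rewrite sumr_const mulr_natl.
rewrite [RHS]big_mkcond; apply: eq_bigr => k _; rewrite finset.in_setC.
by case: (k \in A); rewrite ?mul1r ?mul0r.
Qed.

Lemma bigD1_ord0 (V : nmodType) (L : nat) (L_gt0 : (0 < L)%N) (F : 'I_L -> V) :
  \sum_(t < L) F t = F (Ordinal L_gt0) + \sum_(t < L | (0 < t)%N) F t.
Proof.
rewrite (bigD1 (Ordinal L_gt0)) //=; congr (_ + _); apply: eq_bigl => t.
by rewrite lt0n -val_eqE.
Qed.

Lemma mul_sqrtr_le (R : rcfType) (a x t : R) :
  0 <= a -> 0 <= x -> 0 <= t -> (a * Num.sqrt x <= t) = (a ^+ 2 * x <= t ^+ 2).
Proof.
move=> a_ge0 x_ge0 t_ge0.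
by rewrite -ler_sqr ?nnegrE ?mulr_ge0 ?sqrtr_ge0 // exprMn sqr_sqrtr.
Qed.

Section OmegaL.
Variable R : realType.

Lemma cos_neq1 (x : R) : 0 < x < pi *+ 2 -> cos x != 1.
Proof.
move=> /andP[x_gt0 x_lt2pi].
have cos_half : cos x = 1 - 2 * sin (x / 2) ^+ 2.
  by rewrite [in LHS](splitr x) cosD -!expr2 cos2sin2; ring.
have sin_half_gt0 : 0 < sin (x / 2).
  by apply: sin_gt0_pi; apply/andP; split; rewrite -mulr_natl in x_lt2pi; lra.
rewrite cos_half; apply/eqP => cos_eq1.
have /eqP : sin (x / 2) ^+ 2 = 0 by lra.
by rewrite expf_eq0 /= gt_eqF.
Qed.

Lemma omegaL_expr (L m : nat) :
  omegaL R L ^+ m = cos (m%:R * (2 * pi / L%:R)) +i* sin (m%:R * (2 * pi / L%:R)).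
Proof.
rewrite /omegaL; set a := 2 * pi / L%:R.
elim: m => [|m IHm]; first by rewrite expr0 !mul0r cos0 sin0.
rewrite exprS IHm -addn1 natrD mulrDl mul1r cosD sinD.
by simpc; congr (_ +i* _); ring.
Qed.

Lemma omegaL_prim (L : nat) : (0 < L)%N -> L.-primitive_root (omegaL R L).
Proof.
move=> L_gt0; apply/andP; split => //; apply/forallP => k; apply/eqP.
rewrite unity_rootE omegaL_expr.
have L_pos : (0 : R) < L%:R by rewrite ltr0n.
have pi_pos := pi_gt0 R.
have [->|k_neq] := eqVneq k.+1 L; rewrite ?eqxx ?(negbTE k_neq).
  rewrite mulrCA divff ?mulr1 ?mulr_natl; last exact: lt0r_neq0.
  by rewrite cos2pi sin2pi eqxx.
apply/negbTE; rewrite eq_complex /= negb_and cos_neq1 //.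
have frac_gt0 : (0 : R) < k.+1%:R / L%:R by rewrite divr_gt0 ?ltr0n.
have frac_lt1 : (k.+1%:R : R) / L%:R < 1.
  by rewrite ltr_pdivrMr // mul1r ltr_nat ltn_neqAle k_neq ltn_ord.
have -> : k.+1%:R * (2 * pi / L%:R) = k.+1%:R / L%:R * (2 * pi) :> R.
  by ring.
rewrite -mulr_natl; apply/andP; split; nra.
Qed.

Lemma conj_omegaL (L : nat) : Num.conj (omegaL R L) = (omegaL R L)^-1.
Proof.
have unit_modulus : omegaL R L * Num.conj (omegaL R L) = 1.
  rewrite /omegaL; set a := 2 * pi / L%:R.
  change ((cos a +i* sin a) * (cos a -i* sin a) = 1).
  by simpc; rewrite -!expr2 cos2Dsin2; congr (_ +i* _); ring.
by rewrite (mulr1_eq unit_modulus).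
Qed.

Lemma conj_omegaL_expr (L m : nat) : Num.conj (omegaL R L ^+ m) = omegaL R L ^- m.
Proof. by rewrite -exprVn -conj_omegaL rmorphXn. Qed.

Lemma conj_omegaL_exprV (L m : nat) : Num.conj (omegaL R L ^- m) = omegaL R L ^+ m.
Proof. by rewrite fmorphV /= conj_omegaL_expr invrK. Qed.

End OmegaL.

Section DFT.
Variables (R : realType) (L : nat).
Hypothesis L_gt0 : (0 < L)%N.
Local Notation w := (omegaL R L).
Local Notation s := ((Num.sqrt (L%:R : R))^-1)%:C.

Let w_prim : L.-primitive_root w := omegaL_prim R L_gt0.

Lemma sqr_dft_scale : s ^+ 2 * L%:R = 1.
Proof.
rewrite -rmorphXn exprVn sqr_sqrtr ?ler0n // -(rmorph_nat (real_complex R)) -rmorphM.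
by rewrite mulVf ?rmorph1 // pnatr_eq0 -lt0n.
Qed.

Lemma conj_dft_scale : Num.conj s = s.
Proof. exact: conjc_real. Qed.

Lemma dft_inversion (c : 'I_L -> R[i]) (t : 'I_L) :
  c t = s * \sum_(k < L) dft c k * w ^+ (t * k).
Proof.
transitivity (s ^+ 2 * \sum_(u < L) c u * \sum_(k < L) w ^+ (k * t) * w ^- (k * u)).
  under eq_bigr => u _ do rewrite sum_prim_root_orthogonal //.
  rewrite (bigD1 t) //= big1 => [|u /negbTE u_neq_t]; last first.
    by rewrite eq_sym u_neq_t !mul0r mulr0.
  by rewrite eqxx mul1r addr0 mulrCA sqr_dft_scale mulr1.
rewrite expr2 -mulrA; congr (_ * _).
under [RHS]eq_bigr => k _ do rewrite /dft -mulrA mulr_suml mulr_sumr.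
rewrite exchange_big mulr_sumr; apply: eq_bigr => u _ /=.
rewrite !mulr_sumr; apply: eq_bigr => k _.
by rewrite (mulnC k t) (mulnC k u); ring.
Qed.

Lemma seq_at_dft (d : 'I_L -> R[i]) (m : nat) :
  seq_at d m = s * \sum_(l < L) dft d l * w ^+ (m * l).
Proof.
rewrite /seq_at (insubT (fun x => x < L)%N (ltn_pmod m L_gt0)) /= dft_inversion.
by congr (_ * _); apply: eq_bigr => l _ /=; rewrite !exprM (prim_expr_mod w_prim).
Qed.

Lemma xcorr_dft (c d : 'I_L -> R[i]) (tau : nat) :
  xcorr c d tau = \sum_(l < L) dft c l * Num.conj (dft d l) * w ^- (tau * l).
Proof.
transitivity (\sum_(t < L) \sum_(l < L)
    s * c t * w ^- (t * l) * (Num.conj (dft d l) * w ^- (tau * l))).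
  apply: eq_bigr => t _; rewrite seq_at_dft rmorphM /= conj_dft_scale rmorph_sum.
  rewrite !mulr_sumr; apply: eq_bigr => l _.
  by rewrite rmorphM /= conj_omegaL_expr mulnDl exprD invfM; ring.
rewrite exchange_big; apply: eq_bigr => l _.
by rewrite [dft c _]/dft mulr_sumr !mulr_suml; apply: eq_bigr => t _; ring.
Qed.

Lemma xcorr0_dft (c : 'I_L -> R[i]) :
  xcorr c c 0 = \sum_(l < L) `|dft c l| ^+ 2.
Proof.
by rewrite xcorr_dft; apply: eq_bigr => l _; rewrite mul0n expr0 invr1 mulr1 normCK.
Qed.

Lemma sum_sqr_norm_xcorr (c d : 'I_L -> R[i]) :
  \sum_(tau < L) `|xcorr c d tau| ^+ 2 =
  L%:R * \sum_(l < L) `|dft c l| ^+ 2 * `|dft d l| ^+ 2.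
Proof.
pose a l := dft c l * Num.conj (dft d l).
transitivity (\sum_(k < L) \sum_(l < L)
    a k * Num.conj (a l) * \sum_(tau < L) w ^+ (tau * l) * w ^- (tau * k)).
  under eq_bigr => tau _ do rewrite normCK xcorr_dft rmorph_sum mulr_suml.
  rewrite exchange_big; apply: eq_bigr => k _.
  under eq_bigr => tau _ do rewrite mulr_sumr.
  rewrite exchange_big; apply: eq_bigr => l _; rewrite mulr_sumr; apply: eq_bigr => tau _.
  rewrite /a; move: (dft c k) (dft d k) (dft c l) (dft d l) => ck dk cl dl.
  by rewrite !rmorphM /= conj_omegaL_exprV; ring.
rewrite mulr_sumr; apply: eq_bigr => k _.
under eq_bigr => l _ do rewrite sum_prim_root_orthogonal //.
rewrite (bigD1 k) //= big1 => [|l /negbTE l_neq_k]; last by rewrite l_neq_k mul0r mulr0.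
rewrite eqxx mul1r addr0 !normCK /a; move: (dft c k) (dft d k) => ck dk.
by rewrite rmorphM /= conjCK; ring.
Qed.

End DFT.

Lemma real_complex_normc (R : rcfType) (x : R[i]) : (normc x)%:C = `|x|.
Proof. by []. Qed.

Lemma normc_ge0 (R : rcfType) (x : R[i]) : 0 <= normc x.
Proof. by rewrite -lecR real_complex_normc normr_ge0. Qed.

Lemma sqr_normc_le (R : rcfType) (x : R[i]) (T : R) :
  normc x <= T -> normc x ^+ 2 <= T ^+ 2.
Proof.
move=> le_T; have T_ge0 := le_trans (normc_ge0 x) le_T.
by rewrite ler_sqr ?nnegrE ?normc_ge0.
Qed.

Section SpectralConstraint.
Variables (R : realType) (L : nat) (Om : {set 'I_L}).
Hypothesis Om_small : (#|Om| < L)%N.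

Let L_gt0 : (0 < L)%N := leq_ltn_trans (leq0n _) Om_small.

Let card_setC : #|~: Om|%:R = L%:R - #|Om|%:R :> R[i].
Proof. by rewrite -(addKr #|Om|%:R #|~: Om|%:R) -natrD cardsC card_ord addrC. Qed.

Let codim_neq0 : L%:R - #|Om|%:R != 0 :> R[i].
Proof. by rewrite subr_eq0 eqr_nat gtn_eqF. Qed.

Lemma sqr_norm_dft_spectral (c : 'I_L -> R[i]) (k : 'I_L) :
  spectral_constraint Om c ->
  `|dft c k| ^+ 2 = (k \notin Om)%:R * (L%:R / (L%:R - #|Om|%:R)).
Proof.
move=> /(_ k) [dft_Om dft_notOm].
have [k_in|k_notin] := boolP (k \in Om); first by rewrite dft_Om // normr0 expr0n mul0r.
by rewrite mul1r -real_complex_normc -rmorphXn dft_notOm // fmorph_div rmorphB !rmorph_nat.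
Qed.

Lemma xcorr0_spectral (c : 'I_L -> R[i]) :
  spectral_constraint Om c -> xcorr c c 0 = L%:R.
Proof.
move=> c_spec; rewrite xcorr0_dft //.
under eq_bigr do rewrite sqr_norm_dft_spectral //.
by rewrite sum_indicator_setC card_setC mulrCA divff ?mulr1.
Qed.

Lemma sum_sqr_normc_xcorr_spectral (c d : 'I_L -> R[i]) :
  spectral_constraint Om c -> spectral_constraint Om d ->
  \sum_(tau < L) normc (xcorr c d tau) ^+ 2 = L%:R ^+ 3 / (L%:R - #|Om|%:R).
Proof.
move=> c_spec d_spec; apply: complexI; rewrite rmorph_sum /=.
under eq_bigr do rewrite rmorphXn /= real_complex_normc.
rewrite sum_sqr_norm_xcorr //.
have indicator_sqr (b : bool) (x : R[i]) : b%:R * x * (b%:R * x) = b%:R * (x * x).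
  by case: b; rewrite ?mul1r ?mul0r.
under eq_bigr do rewrite !sqr_norm_dft_spectral // indicator_sqr.
rewrite sum_indicator_setC card_setC fmorph_div rmorphB rmorphXn !rmorph_nat.
by field.
Qed.

Lemma spectral_autocorrelation_bound (c : 'I_L -> R[i]) (T : R) :
  spectral_constraint Om c ->
  (forall tau : 'I_L, (0 < tau)%N -> normc (xcorr c c tau) <= T) ->
  L%:R ^+ 2 * #|Om|%:R / (L%:R - #|Om|%:R) <= (L%:R - 1) * T ^+ 2.
Proof.
move=> c_spec le_T.
have energy := sum_sqr_normc_xcorr_spectral c_spec c_spec.
rewrite (bigD1_ord0 L_gt0) /= xcorr0_spectral // in energy.
have normc_L : normc (L%:R : R[i]) = L%:R.
  by apply: complexI; rewrite real_complex_normc normr_nat rmorph_nat.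
have sum_T : \sum_(tau < L | (0 < tau)%N) T ^+ 2 = (L%:R - 1) * T ^+ 2.
  apply: (addrI (T ^+ 2)); rewrite -(bigD1_ord0 L_gt0 (fun=> T ^+ 2)).
  by rewrite sumr_const card_ord -mulr_natl; ring.
have sum_le : \sum_(tau < L | (0 < tau)%N) normc (xcorr c c tau) ^+ 2 <=
              \sum_(tau < L | (0 < tau)%N) T ^+ 2.
  by apply: ler_sum => tau tau_gt0; apply/sqr_normc_le/le_T.
have codim_gt0 : (0 : R) < L%:R - #|Om|%:R by rewrite subr_gt0 ltr_nat.
have -> : L%:R ^+ 2 * #|Om|%:R / (L%:R - #|Om|%:R) =
          L%:R ^+ 3 / (L%:R - #|Om|%:R) - L%:R ^+ 2 :> R.
  by field; rewrite gt_eqF.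
rewrite normc_L in energy; lra.
Qed.

Lemma spectral_crosscorrelation_bound (c d : 'I_L -> R[i]) (T : R) :
  spectral_constraint Om c -> spectral_constraint Om d ->
  (forall tau : 'I_L, normc (xcorr c d tau) <= T) ->
  L%:R ^+ 2 / (L%:R - #|Om|%:R) <= T ^+ 2.
Proof.
move=> c_spec d_spec le_T.
have L_pos : (0 : R) < L%:R by rewrite ltr0n.
rewrite -(ler_pM2l L_pos) mulrA -exprS.
rewrite -(sum_sqr_normc_xcorr_spectral c_spec d_spec).
have -> : L%:R * T ^+ 2 = \sum_(tau < L) T ^+ 2 by rewrite sumr_const card_ord mulr_natl.
by apply: ler_sum => tau _; apply/sqr_normc_le/le_T.
Qed.

End SpectralConstraint.

Section CorrelationMaxima.
Variables (R : realType) (L M : nat) (C : 'I_M -> 'I_L -> R[i]).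

Lemma theta_a_ge0 : 0 <= theta_a C.
Proof. exact: bigmax_ge_id. Qed.

Lemma theta_c_ge0 : 0 <= theta_c C.
Proof. exact: bigmax_ge_id. Qed.

Lemma normc_xcorr_le_theta_a (i : 'I_M) (tau : 'I_L) :
  (0 < tau)%N -> normc (xcorr (C i) (C i) tau) <= theta_a C.
Proof.
move=> tau_gt0; apply: le_trans (le_bigmax _ _ i).
exact: (le_bigmax_cond _ (fun t : 'I_L => normc (xcorr (C i) (C i) t)) tau_gt0).
Qed.

Lemma normc_xcorr_le_theta_c (i j : 'I_M) (tau : 'I_L) :
  i != j -> normc (xcorr (C i) (C j) tau) <= theta_c C.
Proof.
move=> i_neq_j; apply: le_trans (le_bigmax _ _ i).
apply: le_trans (le_bigmax_cond _
  (fun j => \big[Num.max/0]_(t < L) normc (xcorr (C i) (C j) t)) i_neq_j).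
exact: le_bigmax.
Qed.

End CorrelationMaxima.

Theorem theorem1 (R : realType) (L M : nat) (Om : {set 'I_L})
    (C : 'I_M -> 'I_L -> R[i]) :
  (2 <= L)%N ->
  Om != [set: 'I_L] ->
  (0 < M)%N ->
  injective C ->
  (forall j : 'I_M, spectral_constraint Om (C j)) ->
  L%:R * Num.sqrt (#|Om|%:R / ((L%:R - #|Om|%:R) * (L%:R - 1))) <= theta_a C
  /\ ((2 <= M)%N -> L%:R / Num.sqrt (L%:R - #|Om|%:R) <= theta_c C).
Proof.
move=> L_ge2 Om_proper M_gt0 _ C_spec.
have Om_small : (#|Om| < L)%N.
  by rewrite -[X in (_ < X)%N]card_ord -cardsT proper_card ?properT.
have L_gt1 : (1 : R) < L%:R by rewrite ltr1n.
have codim_gt0 : (0 : R) < L%:R - #|Om|%:R by rewrite subr_gt0 ltr_nat.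
pose i0 := Ordinal M_gt0.
split.
- have ratio_ge0 : 0 <= #|Om|%:R / ((L%:R - #|Om|%:R) * (L%:R - 1)) :> R.
    by rewrite divr_ge0 ?ler0n ?mulr_ge0 ?(ltW codim_gt0) // subr_ge0 ltW.
  rewrite mul_sqrtr_le ?ler0n ?theta_a_ge0 //.
  rewrite invfM !mulrA ler_pdivrMr ?subr_gt0 // [leRHS]mulrC.
  apply: (spectral_autocorrelation_bound Om_small (C_spec i0)) => tau.
  exact: normc_xcorr_le_theta_a.
- move=> M_ge2; pose j0 := Ordinal M_ge2.
  rewrite -sqrtrV ?(ltW codim_gt0) //.
  rewrite mul_sqrtr_le ?ler0n ?invr_ge0 ?(ltW codim_gt0) ?theta_c_ge0 //.
  apply: (spectral_crosscorrelation_bound Om_small (C_spec i0) (C_spec j0)) => tau.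
  exact: normc_xcorr_le_theta_c.
Qed.
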